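(* Consider $\mathrm{CC}(N_{11},N_{10},N_{01},N_{00})=\frac{N_{11}N_{00}-N_{10}N_{01}}{\sqrt{(N_{11}+N_{10})(N_{11}+N_{01})(N_{00}+N_{10})(N_{00}+N_{01})}}$ on nonnegative real arguments for which all four factors under the square root are positive. If $N_{10}+N_{01}>0$, then $\mathrm{CC}$ is strictly increasing in $N_{11}$ (other arguments fixed) and strictly increasing in $N_{00}$ (other arguments fixed). If $N_{11}+N_{00}>0$, then $\mathrm{CC}$ is strictly decreasing in $N_{10}$ and strictly decreasing in $N_{01}$. The same monotonicity holds for $\mathrm{CD}=\frac1\pi\arccos\mathrm{CC}$ with all directions reversed.
   Context: $N_{11},N_{10},N_{01},N_{00}$ play the role of pair-counts of two clusterings: numbers of element pairs that are together in both clusterings, in the first only, in the second only, and in neither. *)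

From Stdlib Require Import Reals.
Open Scope R_scope.

Definition CC (n11 n10 n01 n00 : R) : R :=
  (n11 * n00 - n10 * n01) /
  sqrt ((n11 + n10) * (n11 + n01) * (n00 + n10) * (n00 + n01)).

Definition CD (n11 n10 n01 n00 : R) : R := / PI * acos (CC n11 n10 n01 n00).

Definition dom (n11 n10 n01 n00 : R) : Prop :=
  0 <= n11 /\ 0 <= n10 /\ 0 <= n01 /\ 0 <= n00 /\
  0 < n11 + n10 /\ 0 < n11 + n01 /\ 0 < n00 + n10 /\ 0 < n00 + n01.

(* For fixed N10, N01, N00 the derivative of CC in N11 has the sign of
   2 N00 (N11+N10)(N11+N01) - (N11 N00 - N10 N01)(2 N11 + N10 + N01)
   = N11 N00 (N10+N01) + 2 N10 N01 N00 + 2 N11 N10 N01 + N10 N01 (N10+N01),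
   which is positive when N10 + N01 > 0; the mean value theorem gives strict
   monotonicity in N11.  The other three cases follow from the symmetries
   CC(a,b,c,d) = CC(d,b,c,a) = -CC(b,a,d,c) = -CC(c,d,a,b), which preserve the
   domain.  Finally (N11 N00 - N10 N01)^2 <= (N11+N10)(N00+N01)(N11+N01)(N00+N10)
   puts CC in [-1,1], where arccos is strictly decreasing. *)

From Stdlib Require Import Reals Lra Psatz.
From Coquelicot Require Import Coquelicot.
Open Scope R_scope.

Lemma sqrt_ratio_bound (N X : R) : 0 < X -> N * N <= X -> -1 <= N / sqrt X <= 1.
Proof.
intros X_pos sq_le.
pose proof (sqrt_lt_R0 _ X_pos) as sqrtX_pos.
assert (abs_le : Rabs N <= sqrt X).
{ rewrite <- sqrt_Rsqr_abs. apply sqrt_le_1_alt. unfold Rsqr. lra. }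
assert (sqrtX_inv : sqrt X * / sqrt X = 1) by (field; lra).
unfold Rdiv. revert abs_le. unfold Rabs; destruct (Rcase_abs N); intro.
all: split; apply (Rmult_le_reg_l (sqrt X)); nra.
Qed.

Lemma acos_lt (x y : R) : -1 <= x <= 1 -> -1 <= y <= 1 -> x < y -> acos y < acos x.
Proof.
intros x_bound y_bound xy.
destruct (Rlt_or_le (acos y) (acos x)) as [lt | [lt | acos_eq]]; auto; exfalso.
- pose proof (cos_decreasing_1 _ _ (proj1 (acos_bound x)) (proj2 (acos_bound x))
    (proj1 (acos_bound y)) (proj2 (acos_bound y)) lt) as cos_lt.
  rewrite !cos_acos in cos_lt; auto; lra.
- assert (cos_eq : cos (acos x) = cos (acos y)) by now rewrite acos_eq.
  rewrite !cos_acos in cos_eq; auto; lra.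
Qed.

Lemma CC_swap_diag a b c d : CC a b c d = CC d b c a.
Proof. unfold CC. f_equal; [ring | f_equal; ring]. Qed.

Lemma CC_swap_cols a b c d : CC a b c d = - CC b a d c.
Proof.
unfold CC.
replace ((b + a) * (b + d) * (c + a) * (c + d))
  with ((a + b) * (a + c) * (d + b) * (d + c)) by ring.
unfold Rdiv. ring.
Qed.

Lemma CC_swap_rows a b c d : CC a b c d = - CC c d a b.
Proof.
unfold CC.
replace ((c + d) * (c + a) * (b + d) * (b + a))
  with ((a + b) * (a + c) * (d + b) * (d + c)) by ring.
unfold Rdiv. ring.
Qed.

Lemma dom_swap_diag a b c d : dom a b c d -> dom d b c a.
Proof. unfold dom; lra. Qed.

Lemma dom_swap_cols a b c d : dom a b c d -> dom b a d c.
Proof. unfold dom; lra. Qed.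

Lemma dom_swap_rows a b c d : dom a b c d -> dom c d a b.
Proof. unfold dom; lra. Qed.

Lemma CC_radicand_pos x b c d :
  0 < x + b -> 0 < x + c -> 0 < d + b -> 0 < d + c ->
  0 < (x + b) * (x + c) * (d + b) * (d + c).
Proof.
intros. replace ((x + b) * (x + c) * (d + b) * (d + c))
  with ((x + b) * (x + c) * ((d + b) * (d + c))) by ring.
apply Rmult_lt_0_compat; apply Rmult_lt_0_compat; lra.
Qed.

Lemma CC_bound a b c d : dom a b c d -> -1 <= CC a b c d <= 1.
Proof.
intros [a_ge0 [b_ge0 [c_ge0 [d_ge0 [ab [ac [db dc]]]]]]].
apply sqrt_ratio_bound; [apply CC_radicand_pos; lra |].
assert (le_rows : a * d + b * c <= (a + b) * (d + c)) by nra.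
assert (le_cols : a * d + b * c <= (a + c) * (d + b)) by nra.
assert (sq_le : (a * d + b * c) * (a * d + b * c) <= ((a + b) * (d + c)) * ((a + c) * (d + b))).
{ apply Rmult_le_compat; nra. }
assert (abcd_ge0 : 0 <= a * b * c * d) by (repeat apply Rmult_le_pos; lra).
nra.
Qed.

Definition CC_deriv_num x b c d : R :=
  2 * d * (x + b) * (x + c) - (x * d - b * c) * (2 * x + b + c).

Definition CC_deriv x b c d : R :=
  CC_deriv_num x b c d * ((d + b) * (d + c)) /
  (2 * ((x + b) * (x + c) * (d + b) * (d + c)) *
   sqrt ((x + b) * (x + c) * (d + b) * (d + c))).

Lemma derivable_pt_lim_CC x b c d :
  0 < x + b -> 0 < x + c -> 0 < d + b -> 0 < d + c ->
  derivable_pt_lim (fun x => CC x b c d) x (CC_deriv x b c d).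
Proof.
intros xb xc db dc.
pose proof (CC_radicand_pos _ _ _ _ xb xc db dc) as P_pos.
pose proof (sqrt_lt_R0 _ P_pos) as sqrtP_pos.
pose proof (sqrt_sqrt _ (Rlt_le _ _ P_pos)) as sqrtP_sq.
apply is_derive_Reals. unfold CC, CC_deriv, CC_deriv_num. auto_derive.
- lra.
- rewrite sqrtP_sq. field. repeat split; lra.
Qed.

Lemma CC_deriv_num_pos x b c d :
  0 < x -> 0 <= b -> 0 <= c -> 0 <= d -> 0 < b + c -> 0 < d + b -> 0 < d + c ->
  0 < CC_deriv_num x b c d.
Proof.
intros. unfold CC_deriv_num.
replace (2 * d * (x + b) * (x + c) - (x * d - b * c) * (2 * x + b + c))
  with (x * d * (b + c) + 2 * b * c * d + 2 * x * b * c + b * c * (b + c)) by ring.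
assert (bc_ge0 : 0 <= b * c) by nra.
assert (0 <= b * c * d) by nra.
assert (0 <= x * b * c) by nra.
destruct (Req_dec d 0) as [-> | d_neq0].
- assert (0 < b * c) by nra. nra.
- assert (0 < x * d) by nra. nra.
Qed.

Lemma CC_deriv_pos x b c d :
  0 < x -> 0 <= b -> 0 <= c -> 0 <= d -> 0 < b + c -> 0 < d + b -> 0 < d + c ->
  0 < CC_deriv x b c d.
Proof.
intros.
pose proof (CC_deriv_num_pos x b c d) as num_pos.
assert (P_pos : 0 < (x + b) * (x + c) * (d + b) * (d + c))
  by (apply CC_radicand_pos; lra).
pose proof (sqrt_lt_R0 _ P_pos).
unfold CC_deriv. apply Rdiv_lt_0_compat; apply Rmult_lt_0_compat; nra.
Qed.

Lemma CC_increasing_11 a a' b c d : 0 < b + c ->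
  dom a b c d -> dom a' b c d -> a < a' -> CC a b c d < CC a' b c d.
Proof.
intros bc [a_ge0 [b_ge0 [c_ge0 [d_ge0 [ab [ac [db dc]]]]]]]
  [_ [_ [_ [_ [ab' [ac' _]]]]]] aa'.
destruct (MVT_cor2 (fun x => CC x b c d) (fun x => CC_deriv x b c d) a a' aa')
  as [z [CC_diff [az za']]].
{ intros x ax. apply derivable_pt_lim_CC; lra. }
assert (deriv_pos : 0 < CC_deriv z b c d) by (apply CC_deriv_pos; lra).
nra.
Qed.

Lemma CC_increasing_00 n11 n10 n01 d d' : 0 < n10 + n01 ->
  dom n11 n10 n01 d -> dom n11 n10 n01 d' -> d < d' ->
  CC n11 n10 n01 d < CC n11 n10 n01 d'.
Proof.
intros. rewrite (CC_swap_diag n11 _ _ d), (CC_swap_diag n11 _ _ d').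
apply CC_increasing_11; auto using dom_swap_diag.
Qed.

Lemma CC_decreasing_10 n11 b b' n01 n00 : 0 < n11 + n00 ->
  dom n11 b n01 n00 -> dom n11 b' n01 n00 -> b < b' ->
  CC n11 b' n01 n00 < CC n11 b n01 n00.
Proof.
intros. rewrite (CC_swap_cols n11 b), (CC_swap_cols n11 b').
apply Ropp_lt_contravar, CC_increasing_11; auto using dom_swap_cols; lra.
Qed.

Lemma CC_decreasing_01 n11 n10 c c' n00 : 0 < n11 + n00 ->
  dom n11 n10 c n00 -> dom n11 n10 c' n00 -> c < c' ->
  CC n11 n10 c' n00 < CC n11 n10 c n00.
Proof.
intros. rewrite (CC_swap_rows n11 n10 c), (CC_swap_rows n11 n10 c').
apply Ropp_lt_contravar, CC_increasing_11; auto using dom_swap_rows; lra.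
Qed.

Lemma CD_lt_of_CC_lt a b c d a' b' c' d' : dom a b c d -> dom a' b' c' d' ->
  CC a b c d < CC a' b' c' d' -> CD a' b' c' d' < CD a b c d.
Proof.
intros dom_abcd dom_abcd' CC_lt. unfold CD.
apply Rmult_lt_compat_l; [apply Rinv_0_lt_compat, PI_RGT_0 |].
apply acos_lt; auto using CC_bound.
Qed.

Theorem mainTheorem9 :
  (forall a a' n10 n01 n00, 0 < n10 + n01 ->
     dom a n10 n01 n00 -> dom a' n10 n01 n00 -> a < a' ->
     CC a n10 n01 n00 < CC a' n10 n01 n00) /\
  (forall n11 n10 n01 d d', 0 < n10 + n01 ->
     dom n11 n10 n01 d -> dom n11 n10 n01 d' -> d < d' ->
     CC n11 n10 n01 d < CC n11 n10 n01 d') /\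
  (forall n11 b b' n01 n00, 0 < n11 + n00 ->
     dom n11 b n01 n00 -> dom n11 b' n01 n00 -> b < b' ->
     CC n11 b' n01 n00 < CC n11 b n01 n00) /\
  (forall n11 n10 c c' n00, 0 < n11 + n00 ->
     dom n11 n10 c n00 -> dom n11 n10 c' n00 -> c < c' ->
     CC n11 n10 c' n00 < CC n11 n10 c n00) /\
  (forall a a' n10 n01 n00, 0 < n10 + n01 ->
     dom a n10 n01 n00 -> dom a' n10 n01 n00 -> a < a' ->
     CD a' n10 n01 n00 < CD a n10 n01 n00) /\
  (forall n11 n10 n01 d d', 0 < n10 + n01 ->
     dom n11 n10 n01 d -> dom n11 n10 n01 d' -> d < d' ->
     CD n11 n10 n01 d' < CD n11 n10 n01 d) /\
  (forall n11 b b' n01 n00, 0 < n11 + n00 ->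
     dom n11 b n01 n00 -> dom n11 b' n01 n00 -> b < b' ->
     CD n11 b n01 n00 < CD n11 b' n01 n00) /\
  (forall n11 n10 c c' n00, 0 < n11 + n00 ->
     dom n11 n10 c n00 -> dom n11 n10 c' n00 -> c < c' ->
     CD n11 n10 c n00 < CD n11 n10 c' n00).
Proof.
repeat split; intros.
- now apply CC_increasing_11.
- now apply CC_increasing_00.
- now apply CC_decreasing_10.
- now apply CC_decreasing_01.
- apply CD_lt_of_CC_lt; auto. now apply CC_increasing_11.
- apply CD_lt_of_CC_lt; auto. now apply CC_increasing_00.
- apply CD_lt_of_CC_lt; auto. now apply CC_decreasing_10.
- apply CD_lt_of_CC_lt; auto. now apply CC_decreasing_01.
Qed.
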